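(* The functor $\mathfrak{M}^{\mathrm{nc}}$ preserves homotopy: if $f_0,f_1:A\to A'$ and $g_0,g_1:B\to B'$ are morphisms in $\mathbf{A}_{\mathrm{nc}}$ with $f_0$ homotopic to $f_1$ and $g_0$ homotopic to $g_1$, then the pro-morphisms $\mathfrak{M}_{f_0,g_0},\mathfrak{M}_{f_1,g_1}:\mathfrak{M}^{\mathrm{nc}}_{A,B'}\to\mathfrak{M}^{\mathrm{nc}}_{A',B}$ are strongly homotopic.
   Context: Fix a field $\mathbb{F}$; $\mathbf{A}_{\mathrm{nc}}$ is the category of all associative (not necessarily unital or commutative) $\mathbb{F}$-algebras; $\otimes=\otimes_{\mathbb{F}}$; pro-algebras are inverse systems of algebras over directed sets with $\mathrm{Hom}((C_i),(D_j))=\varprojlim_j\varinjlim_i\mathrm{Hom}(C_i,D_j)$, tensor products componentwise. For algebras $A,B$, $\mathfrak{M}^{\mathrm{nc}}_{A,B}$ with $\Upsilon_{A,B}:A\to B\otimes\mathfrak{M}^{\mathrm{nc}}_{A,B}$ is the (existing, unique up to isomorphism) universal pair: every pro-morphism $\varphi:A\to B\otimes C$ into a pro-algebra factors as $(\mathrm{id}_B\otimes\overline{\varphi})\Upsilon_{A,B}$ for a unique $\overline{\varphi}:\mathfrak{M}^{\mathrm{nc}}_{A,B}\to C$. For $f:A\to A'$ and $g:B\to B'$ (so that $\mathfrak{M}$ is covariant in the first and contravariant in the second variable), $\mathfrak{M}_{f,g}:\mathfrak{M}^{\mathrm{nc}}_{A,B'}\to\mathfrak{M}^{\mathrm{nc}}_{A',B}$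 is the unique pro-morphism with $(g\otimes\mathrm{id})\Upsilon_{A',B}f=(\mathrm{id}_{B'}\otimes\mathfrak{M}_{f,g})\Upsilon_{A,B'}$. For an algebra or pro-algebra $B$, $B[x]=B\otimes\mathbb{F}[x]$ and $\mathrm{p}_0,\mathrm{p}_1:B[x]\to B$ are evaluations at $x=0,1$. Two (pro-)morphisms $f,g:A\to B$ are elementary homotopic if there is a (pro-)morphism $H:A\to B[x]$ with $\mathrm{p}_0H=f$, $\mathrm{p}_1H=g$. Morphisms of algebras are homotopic, and pro-morphisms are strongly homotopic, if they are connected by a finite chain of elementary homotopies (of morphisms, resp. pro-morphisms). *)

From mathcomp Require Import all_boot all_algebra.
From Stdlib Require Import ClassicalEpsilon Relations.
Set Implicit Arguments. Unset Strict Implicit. Unset Printing Implicit Defensive.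
Import GRing.Theory.
Local Open Scope ring_scope.

Section Defs.
Variable F : fieldType.

Record alg := Alg {
  car :> Type;
  a0 : car;
  aadd : car -> car -> car;
  aopp : car -> car;
  ascale : F -> car -> car;
  amul : car -> car -> car }.

Definition is_alg (A : alg) : Prop :=
  (forall x y z : A, aadd x (aadd y z) = aadd (aadd x y) z) /\
  (forall x y : A, aadd x y = aadd y x) /\
  (forall x : A, aadd (a0 A) x = x) /\
  (forall x : A, aadd (aopp x) x = a0 A) /\
  (forall (a : F) (x y : A), ascale a (aadd x y) = aadd (ascale a x) (ascale a y)) /\
  (forall (a b : F) (x : A), ascale (a + b) x = aadd (ascale a x) (ascale b x)) /\
  (forall (a b : F) (x : A), ascale a (ascale b x) = ascale (a * b) x) /\
  (forall x : A, ascale 1 x = x) /\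
  (forall x y z : A, amul x (aadd y z) = aadd (amul x y) (amul x z)) /\
  (forall x y z : A, amul (aadd x y) z = aadd (amul x z) (amul y z)) /\
  (forall (a : F) (x y : A), amul (ascale a x) y = ascale a (amul x y)) /\
  (forall (a : F) (x y : A), amul x (ascale a y) = ascale a (amul x y)) /\
  (forall x y z : A, amul x (amul y z) = amul (amul x y) z).

Definition is_hom (A B : alg) (f : A -> B) : Prop :=
  [/\ (forall x y, f (aadd x y) = aadd (f x) (f y)),
      (forall a x, f (ascale a x) = ascale a (f x)) &
      (forall x y, f (amul x y) = amul (f x) (f y))].

(* elements of B (x) C are represented by formal sums  sum_k b_k (x) c_k
   (lists of pairs); two formal sums define the same tensor iff every
   bilinear form B x C -> F takes the same value on them (this is the
   kernel of the canonical map onto B (x)_F C, F being a field). *)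
Definition bilin (B C : alg) (phi : B -> C -> F) : Prop :=
  [/\ (forall b b' c, phi (aadd b b') c = phi b c + phi b' c),
      (forall a b c, phi (ascale a b) c = a * phi b c),
      (forall b c c', phi b (aadd c c') = phi b c + phi b c') &
      (forall a b c, phi b (ascale a c) = a * phi b c)].

Definition tens_rel (B C : alg) (s t : seq (B * C)%type) : Prop :=
  forall phi : B -> C -> F, bilin phi ->
    \sum_(p <- s) phi p.1 p.2 = \sum_(p <- t) phi p.1 p.2.

Definition tcar (B C : alg) : Type :=
  {P : seq (B * C)%type -> Prop | exists s, P = tens_rel s}.

Definition tclass (B C : alg) (s : seq (B * C)%type) : tcar B C :=
  exist _ (tens_rel s) (ex_intro _ s erefl).

Definition trepr (B C : alg) (x : tcar B C) : seq (B * C)%type :=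
  proj1_sig (constructive_indefinite_description _ (proj2_sig x)).

Definition tens (B C : alg) : alg :=
  @Alg (tcar B C) (tclass [::])
    (fun x y => tclass (trepr x ++ trepr y))
    (fun x => tclass [seq (aopp p.1, p.2) | p <- trepr x])
    (fun a x => tclass [seq (ascale a p.1, p.2) | p <- trepr x])
    (fun x y => tclass [seq (amul p.1 q.1, amul p.2 q.2) | p <- trepr x, q <- trepr y]).

Definition tmap (B B' C C' : alg) (f : B -> B') (g : C -> C')
  (x : tens B C) : tens B' C' :=
  tclass [seq (f p.1, g p.2) | p <- trepr x].

Definition polyA : alg :=
  @Alg {poly F} 0 +%R (fun p => - p) (fun a p => a *: p) *%R.

Definition ev (B : alg) (a : F) (x : tens B polyA) : B :=
  foldr (fun p acc => aadd (ascale (p.2 : {poly F}).[a] p.1) acc) (a0 B) (trepr x).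

Definition elem_htpy (A B : alg) (f g : A -> B) : Prop :=
  is_hom f /\ is_hom g /\
  exists H : A -> tens B polyA, is_hom H /\
    (forall x, ev 0 (H x) = f x) /\ (forall x, ev 1 (H x) = g x).

Definition homotopic (A B : alg) : relation (A -> B) :=
  @clos_refl_trans _ (@elem_htpy A B).

Record proalg := ProAlg {
  pidx : Type;
  ple : pidx -> pidx -> Prop;
  pobj : pidx -> alg;
  ptr : forall i j, ple i j -> pobj j -> pobj i }.

Arguments ple : clear implicits.
Arguments pobj : clear implicits.
Arguments ptr p {i j} _ _.

Definition is_proalg (C : proalg) : Prop :=
  (forall i, ple C i i) /\
  (forall i j k, ple C i j -> ple C j k -> ple C i k) /\
  inhabited (pidx C) /\
  (forall i j, exists k, ple C i k /\ ple C j k) /\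
  (forall i, is_alg (pobj C i)) /\
  (forall i j (h : ple C i j), is_hom (ptr _ h)) /\
  (forall i (h : ple C i i) x, ptr _ h x = x) /\
  (forall i j k (hij : ple C i j) (hjk : ple C j k) (hik : ple C i k) x,
     ptr _ hij (ptr _ hjk x) = ptr _ hik x).

(* a pro-morphism (C_i) -> (D_j), i.e. an element of lim_j colim_i Hom(C_i,D_j),
   given by chosen representatives f_j : C_{r j} -> D_j *)
Record promor (C D : proalg) := PM {
  pm_idx : pidx D -> pidx C;
  pm_map : forall j, pobj C (pm_idx j) -> pobj D j }.

Arguments pm_idx {C D} _ _.
Arguments pm_map {C D} _ _ _.

Definition germ_eq (C : proalg) (X : alg) (i : pidx C) (f : pobj C i -> X)
  (i' : pidx C) (f' : pobj C i' -> X) : Prop :=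
  exists k (hk : ple C i k) (hk' : ple C i' k),
    forall x, f (ptr _ hk x) = f' (ptr _ hk' x).

Definition is_promor (C D : proalg) (phi : promor C D) : Prop :=
  (forall j, is_hom (pm_map phi j)) /\
  (forall j j' (h : ple D j j'),
     germ_eq (fun x => ptr _ h (pm_map phi j' x)) (pm_map phi j)).

Definition pm_eq (C D : proalg) (phi psi : promor C D) : Prop :=
  forall j, germ_eq (pm_map phi j) (pm_map psi j).

Definition pm_comp (C D E : proalg) (psi : promor D E) (phi : promor C D) :
  promor C E :=
  @PM C E (fun k => pm_idx phi (pm_idx psi k))
    (fun k x => pm_map psi k (pm_map phi (pm_idx psi k) x)).

Definition constP (A : alg) : proalg :=
  @ProAlg unit (fun _ _ => True) (fun _ => A) (fun _ _ _ x => x).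

Definition const_mor (A A' : alg) (f : A -> A') : promor (constP A) (constP A') :=
  @PM (constP A) (constP A') (fun _ => tt) (fun _ x => f x).

Definition tensP (B : alg) (C : proalg) : proalg :=
  @ProAlg (pidx C) (@ple C) (fun i => tens B (pobj C i))
    (fun i j h => tmap id (ptr _ h)).

Definition idtens (B : alg) (C D : proalg) (phi : promor C D) :
  promor (tensP B C) (tensP B D) :=
  @PM (tensP B C) (tensP B D) (pm_idx phi) (fun j => tmap id (pm_map phi j)).

Definition gtens (B B' : alg) (g : B -> B') (C : proalg) :
  promor (tensP B C) (tensP B' C) :=
  @PM (tensP B C) (tensP B' C) id (fun j => tmap g id).

Definition polyP (D : proalg) : proalg :=
  @ProAlg (pidx D) (@ple D) (fun j => tens (pobj D j) polyA)
    (fun i j h => tmap (ptr _ h) id).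

Definition evP (D : proalg) (a : F) : promor (polyP D) D :=
  @PM (polyP D) D id (fun j => @ev (pobj D j) a).

Definition elem_htpyP (C D : proalg) (f g : promor C D) : Prop :=
  is_promor f /\ is_promor g /\
  exists H : promor C (polyP D), is_promor H /\
    pm_eq (pm_comp (evP D 0) H) f /\ pm_eq (pm_comp (evP D 1) H) g.

Definition strongly_homotopic (C D : proalg) : relation (promor C D) :=
  @clos_refl_trans _ (@elem_htpyP C D).

Definition is_universal (A B : alg) (M : proalg)
  (U : promor (constP A) (tensP B M)) : Prop :=
  is_proalg M /\ is_promor U /\
  forall (C : proalg), is_proalg C ->
  forall phi : promor (constP A) (tensP B C), is_promor phi ->
    exists psi : promor M C,
      [/\ is_promor psi,
          pm_eq (pm_comp (idtens B psi) U) phi &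
          forall psi' : promor M C, is_promor psi' ->
            pm_eq (pm_comp (idtens B psi') U) phi -> pm_eq psi' psi].

End Defs.

(* Let H_f : A -> A'[x] and H_g : B -> B'[x] be elementary homotopies.
   Composing (H_g (x) id) Upsilon_{A',B} H_f and multiplying the two polynomial
   variables gives a morphism A -> B' (x) M^nc_{A',B}[x]; by the universal property
   of M^nc_{A,B'} it comes from a pro-morphism H : M^nc_{A,B'} -> M^nc_{A',B}[x].
   Evaluating at x = 0 and x = 1 and using the uniqueness part of the universal
   property identifies p_0 H and p_1 H with M_{f_0,g_0} and M_{f_1,g_1}.  Chaining
   elementary homotopies, first in f and then in g, gives the theorem.
   Tensors are only accessible through their pairings with bilinear forms, so
   evaluation maps are computed by testing against linear forms, which separate
   points of a vector space by Zorn's lemma. *)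

From Pilot Require Import Defs.
From HB Require Import structures.
From mathcomp Require Import all_boot all_algebra.
From Stdlib Require Import Relations.
From mathcomp Require Import boolp classical_sets.
Set Implicit Arguments. Unset Strict Implicit. Unset Printing Implicit Defensive.
Import GRing.Theory.
Local Open Scope ring_scope.

Local Notation obj C i := (@pobj _ C i).
Local Notation pmap phi j := (@pm_map _ _ _ phi j).

Local Ltac alg_axioms HV :=
  case: HV => ? [? [? [? [? [? [? [? [? [? [? [? ?]]]]]]]]]]].

Section AlgebraAxioms.
Variables (F : fieldType) (V : alg F).
Hypothesis HV : is_alg V.

Lemma alg_addA (x y z : V) : aadd x (aadd y z) = aadd (aadd x y) z.
Proof. by alg_axioms HV. Qed.
Lemma alg_addC (x y : V) : aadd x y = aadd y x.
Proof. by alg_axioms HV. Qed.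
Lemma alg_add0 (x : V) : aadd (a0 V) x = x.
Proof. by alg_axioms HV. Qed.
Lemma alg_addN (x : V) : aadd (aopp x) x = a0 V.
Proof. by alg_axioms HV. Qed.
Lemma alg_scaleDr (a : F) (x y : V) : ascale a (aadd x y) = aadd (ascale a x) (ascale a y).
Proof. by alg_axioms HV. Qed.
Lemma alg_scaleDl (a b : F) (x : V) : ascale (a + b) x = aadd (ascale a x) (ascale b x).
Proof. by alg_axioms HV. Qed.
Lemma alg_scaleA (a b : F) (x : V) : ascale a (ascale b x) = ascale (a * b) x.
Proof. by alg_axioms HV. Qed.
Lemma alg_scale1 (x : V) : ascale 1 x = x.
Proof. by alg_axioms HV. Qed.
Lemma alg_mulDr (x y z : V) : amul x (aadd y z) = aadd (amul x y) (amul x z).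
Proof. by alg_axioms HV. Qed.
Lemma alg_mulDl (x y z : V) : amul (aadd x y) z = aadd (amul x z) (amul y z).
Proof. by alg_axioms HV. Qed.
Lemma alg_mulZl (a : F) (x y : V) : amul (ascale a x) y = ascale a (amul x y).
Proof. by alg_axioms HV. Qed.
Lemma alg_mulZr (a : F) (x y : V) : amul x (ascale a y) = ascale a (amul x y).
Proof. by alg_axioms HV. Qed.
Lemma alg_mulA (x y z : V) : amul x (amul y z) = amul (amul x y) z.
Proof. by alg_axioms HV. Qed.

End AlgebraAxioms.

Section LinearMaps.
Variable F : fieldType.
Implicit Types X Y Z V W : alg F.

Definition is_linear X Y (f : X -> Y) :=
  (forall x y, f (aadd x y) = aadd (f x) (f y)) /\ (forall a x, f (ascale a x) = ascale a (f x)).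

Lemma hom_linear X Y (f : X -> Y) : is_hom f -> is_linear f.
Proof. by case. Qed.

Lemma linear_id X : is_linear (@id X).
Proof. by []. Qed.

Lemma comp_linear X Y Z (f : Y -> Z) (g : X -> Y) :
  is_linear f -> is_linear g -> is_linear (f \o g).
Proof. by move=> [f1 f2] [g1 g2]; split=> * /=; rewrite ?g1 ?g2 ?f1 ?f2. Qed.

Lemma comp_hom X Y Z (f : Y -> Z) (g : X -> Y) : is_hom f -> is_hom g -> is_hom (f \o g).
Proof. by move=> [f1 f2 f3] [g1 g2 g3]; split=> * /=; rewrite ?g1 ?g2 ?g3 ?f1 ?f2 ?f3. Qed.

Definition is_linform V (l : V -> F) :=
  (forall x y, l (aadd x y) = l x + l y) /\ (forall c x, l (ascale c x) = c * l x).

Lemma linform0 V (l : V -> F) : is_alg V -> is_linform l -> l (a0 V) = 0.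
Proof.
by move=> HV [lD _]; apply: (@addIr _ (l (a0 V))); rewrite -lD alg_add0 // add0r.
Qed.

Lemma linform_comp V W (l : W -> F) (f : V -> W) :
  is_linform l -> is_linear f -> is_linform (l \o f).
Proof. by move=> [lD lZ] [fD fZ]; split=> * /=; rewrite ?fD ?fZ ?lD ?lZ. Qed.

End LinearMaps.

(** * Linear forms on a vector space *)

Section LinearForms.
Variables (F : fieldType) (V : lmodType F).
Local Open Scope classical_set_scope.

(* No [S 0] condition: Zorn_bigcup also covers the empty chain. *)
Definition avoiding_subspace (w : V) (S : set V) :=
  [/\ forall x y, S x -> S y -> S (x + y), forall (c : F) x, S x -> S (c *: x) & ~ S w].

Lemma avoiding_subspace_chain (w : V) (C : set (set V)) :
  C `<=` avoiding_subspace w -> total_on C subset ->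
  avoiding_subspace w (\bigcup_(S in C) S).
Proof.
move=> CP Ctot; split.
- move=> x y [S CS Sx] [T CT Ty].
  have [ST|TS] := Ctot S T CS CT.
  + by exists T => //; have [+ _ _] := CP T CT; apply; [apply: ST|].
  + by exists S => //; have [+ _ _] := CP S CS; apply; [|apply: TS].
- by move=> c x [S CS Sx]; exists S => //; have [_ + _] := CP S CS; apply.
- by move=> [S CS Sw]; have [_ _] := CP S CS; apply.
Qed.

Lemma maximal_avoiding_subspace (w : V) : w != 0 ->
  exists S, avoiding_subspace w S /\ forall v, exists c, S (v - c *: w).
Proof.
move=> w_neq0; have [S [[SD SZ Sw] Smax]] := Zorn_bigcup (@avoiding_subspace_chain w).
have S0 : S 0.
  apply: contrapT => NS0; apply: (Smax (S `|` [set 0])).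
    by split=> [x Sx|/(_ 0 (or_intror erefl))]; [left|].
  split=> [x y [Sx|->] [Sy|->]|c x [Sx|->]|[//|/eqP]]; rewrite ?addr0 ?add0r ?scaler0;
    by [left; apply: SD | left | right | left; apply: SZ | rewrite (negbTE w_neq0)].
exists S; split=> // v; apply: contrapT => Nv.
pose T := [set x | exists c u, S u /\ x = u + c *: v].
have ST : S `<=` T by move=> u Su; exists 0, u; rewrite scale0r addr0.
apply: (Smax T).
  split=> // /(_ v) TS; apply: Nv; exists 0; rewrite scale0r subr0.
  by apply: TS; exists 1, 0; rewrite scale1r add0r.
split.
- move=> _ _ [c [u [Su ->]]] [d [u' [Su' ->]]]; exists (c + d), (u + u').
  by split; [apply: SD|rewrite scalerDl addrACA].
- by move=> a _ [c [u [Su ->]]]; exists (a * c), (a *: u); rewrite scalerDr scalerA; split; [apply: SZ|].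
- move=> [c [u [Su wE]]]; have [c0|c_neq0] := eqVneq c 0.
    by apply: Sw; rewrite wE c0 scale0r addr0.
  apply: Nv; exists c^-1.
  have -> : v - c^-1 *: w = (- c^-1) *: u.
    by rewrite wE scalerDr scalerA mulVf // scale1r opprD addrCA subrr addr0 scaleNr.
  exact: SZ.
Qed.

Definition is_linear_form (l : V -> F) :=
  (forall x y, l (x + y) = l x + l y) /\ (forall c x, l (c *: x) = c * l x).

Lemma exists_linear_form (w : V) : w != 0 -> exists l, is_linear_form l /\ l w = 1.
Proof.
move=> w_neq0; have [S [[SD SZ Sw] Scoord]] := maximal_avoiding_subspace w_neq0.
have coord_uniq v c d : S (v - c *: w) -> S (v - d *: w) -> c = d.
  move=> Sc Sd; apply: contrapT => cd; apply: Sw.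
  have dc_neq0 : d - c != 0 by rewrite subr_eq0 eq_sym; apply/eqP.
  have E : (v - c *: w) + (-1) *: (v - d *: w) = (d - c) *: w.
    by rewrite scaleN1r opprB addrC addrA subrK scalerBl.
  by have := SZ (d - c)^-1 _ (SD _ _ Sc (SZ (-1) _ Sd)); rewrite E scalerA mulVf // scale1r.
(* the coordinate of v along w modulo S *)
pose l v := projT1 (cid (Scoord v)).
have Sl v : S (v - l v *: w) := projT2 (cid (Scoord v)).
exists l; split; first split=> [x y|a x]; apply: coord_uniq (Sl _) _.
- by rewrite scalerDl opprD addrACA; apply: SD.
- by rewrite -scalerA -scalerBr; apply: SZ.
- by rewrite scale1r subrr -(scale0r (w - l w *: w)); apply: SZ.
Qed.

Lemma linear_forms_separate (u v : V) :
  (forall l, is_linear_form l -> l u = l v) -> u = v.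
Proof.
move=> Euv; apply/eqP; rewrite -subr_eq0; apply: contraT => uv_neq0.
have [l [[lD lZ] lw]] := exists_linear_form uv_neq0.
have : l (u - v) = 0 by rewrite lD -scaleN1r lZ mulN1r Euv ?subrr //; split.
by rewrite lw => /eqP; rewrite oner_eq0.
Qed.

End LinearForms.

(** * Tensor products *)

Section Tensors.
Variable F : fieldType.
Implicit Types X Y Z V : alg F.

Definition bilinp X Y (G : (X * Y)%type -> F) := bilin (fun b c => G (b, c)).

Lemma bilinp_linform_l X Y G (c : Y) : bilinp G -> is_linform (fun b : X => G (b, c)).
Proof. by case. Qed.

(* The value at x of the linear form on X (x) Y induced by G. *)
Definition tsum X Y (G : (X * Y)%type -> F) (x : tens X Y) := \sum_(p <- trepr x) G p.

Lemma eq_tsum X Y G G' (x : tens X Y) : G =1 G' -> tsum G x = tsum G' x.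
Proof. by move=> eqG; apply: eq_bigr => p _. Qed.

Lemma tsum_split X Y G G' (x : tens X Y) :
  tsum (fun p => G p + G' p) x = tsum G x + tsum G' x.
Proof. exact: big_split. Qed.

Lemma tsum_mulr X Y G a (x : tens X Y) : tsum (fun p => a * G p) x = a * tsum G x.
Proof. by rewrite /tsum mulr_sumr. Qed.

Lemma tens_rel_trepr X Y (x : tens X Y) : proj1_sig x = tens_rel (trepr x).
Proof. exact: (proj2_sig (ClassicalEpsilon.constructive_indefinite_description _ (proj2_sig x))). Qed.

Lemma tclassK X Y (x : tens X Y) : tclass (trepr x) = x.
Proof.
by apply: (@eq_sig_hprop _ _ (fun _ => @Prop_irrelevance _) (tclass _) x); rewrite /= -tens_rel_trepr.
Qed.

Lemma tsum_tclass X Y (G : (X * Y)%type -> F) s :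
  bilinp G -> tsum G (tclass s) = \sum_(p <- s) G p.
Proof.
move=> bG; have srel : tens_rel s (trepr (tclass s)).
  by rewrite -[tens_rel s]/(proj1_sig (tclass s)) tens_rel_trepr.
have /= := srel (fun b c => G (b, c)) bG.
by rewrite /tsum !(eq_bigr _ (fun p _ => congr1 G (esym (surjective_pairing p)))) => ->.
Qed.

Lemma eq_tens X Y (x y : tens X Y) :
  (forall G, bilinp G -> tsum G x = tsum G y) -> x = y.
Proof.
move=> Exy; rewrite -(tclassK x) -(tclassK y).
apply: (@eq_sig_hprop _ _ (fun _ => @Prop_irrelevance _) (tclass _) (tclass _)) => /=.
apply/funext => s; apply/propext.
by split=> rel phi bphi; rewrite -rel //; have := Exy (fun p => phi p.1 p.2) bphi.
Qed.

Lemma tsum_add X Y G (x y : tens X Y) :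
  bilinp G -> tsum G (aadd x y) = tsum G x + tsum G y.
Proof. by move=> bG; rewrite tsum_tclass // big_cat. Qed.

Lemma tsum0 X Y G : bilinp G -> tsum G (a0 (tens X Y)) = 0.
Proof. by move=> bG; rewrite tsum_tclass // big_nil. Qed.

Lemma tsumZ X Y G a (x : tens X Y) : bilinp G -> tsum G (ascale a x) = a * tsum G x.
Proof.
move=> bG; rewrite tsum_tclass // big_map mulr_sumr.
by apply: eq_bigr => -[b c] _; case: bG.
Qed.

Lemma bilinp_oppl X Y G (b : X) (c : Y) :
  is_alg X -> bilinp G -> G (aopp b, c) = - G (b, c).
Proof.
move=> HX bG; apply/eqP; rewrite -addr_eq0.
by case: (bG) => G1 _ _ _; rewrite -G1 alg_addN // (linform0 HX (bilinp_linform_l c bG)).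
Qed.

Lemma tsumN X Y G (x : tens X Y) : is_alg X -> bilinp G -> tsum G (aopp x) = - tsum G x.
Proof.
move=> HX bG; rewrite tsum_tclass // big_map /tsum -sumrN.
by apply: eq_bigr => -[b c] _; exact: bilinp_oppl.
Qed.

Lemma tsum_tmap X Y X' Y' G (f : X -> X') (g : Y -> Y') (x : tens X Y) :
  bilinp G -> tsum G (tmap f g x) = tsum (fun p => G (f p.1, g p.2)) x.
Proof. by move=> bG; rewrite tsum_tclass // big_map. Qed.

Lemma tsum_mul X Y G (x y : tens X Y) : bilinp G ->
  tsum G (amul x y) = tsum (fun p => tsum (fun q => G (amul p.1 q.1, amul p.2 q.2)) y) x.
Proof. by move=> bG; rewrite tsum_tclass // big_allpairs_dep. Qed.

Lemma linform_tsum V X Y (h : V -> tens X Y) G :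
  is_linear h -> bilinp G -> is_linform (fun v => tsum G (h v)).
Proof. by move=> [hD hZ] bG; split=> *; rewrite ?hD ?hZ ?tsum_add ?tsumZ. Qed.

Lemma bilinp_comp X Y X' Y' G (f : X -> X') (g : Y -> Y') :
  bilinp G -> is_linear f -> is_linear g -> bilinp (fun p => G (f p.1, g p.2)).
Proof.
move=> [G1 G2 G3 G4] [f1 f2] [g1 g2].
by split=> * /=; rewrite ?f1 ?f2 ?g1 ?g2 ?G1 ?G2 ?G3 ?G4.
Qed.

Lemma bilinp_tsum X Y X' Y' (K : (X * Y)%type -> (X' * Y')%type -> F) (y : tens X' Y') :
  (forall q, bilinp (K^~ q)) -> bilinp (fun p => tsum (K p) y).
Proof.
move=> bK; split=> * /=; rewrite -?tsum_mulr -?tsum_split;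
  by apply: eq_tsum => q; case: (bK q).
Qed.

Lemma bilinp_tsum_linear X Y X' Y' (h : X -> tens X' Y')
  (K : Y -> (X' * Y')%type -> F) :
  is_linear h -> (forall y, bilinp (K y)) ->
  (forall y y' r, K (aadd y y') r = K y r + K y' r) -> (forall c y r, K (ascale c y) r = c * K y r) ->
  bilinp (fun p => tsum (K p.2) (h p.1)).
Proof.
move=> [hD hZ] bK KD KZ; split=> * /=.
- by rewrite hD tsum_add.
- by rewrite hZ tsumZ.
- by rewrite -tsum_split; apply: eq_tsum => r; rewrite KD.
- by rewrite -tsum_mulr; apply: eq_tsum => r; rewrite KZ.
Qed.

Section Multiplication.
Variables (X Y : alg F) (G : (X * Y)%type -> F).
Hypotheses (HX : is_alg X) (HY : is_alg Y) (bG : bilinp G).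

Lemma bilinp_mulr (q : (X * Y)%type) : bilinp (fun p => G (amul p.1 q.1, amul p.2 q.2)).
Proof.
case: bG => G1 G2 G3 G4.
by split=> * /=; rewrite ?alg_mulDl ?alg_mulZl ?G1 ?G2 ?G3 ?G4.
Qed.

Lemma bilinp_mull (p : (X * Y)%type) : bilinp (fun q => G (amul p.1 q.1, amul p.2 q.2)).
Proof.
case: bG => G1 G2 G3 G4.
by split=> * /=; rewrite ?alg_mulDr ?alg_mulZr ?G1 ?G2 ?G3 ?G4.
Qed.

End Multiplication.

Lemma tens_alg X Y : is_alg X -> is_alg Y -> is_alg (tens X Y).
Proof.
move=> HX HY.
have mrs (G : (X * Y)%type -> F) (y : tens X Y) :
  bilinp G -> bilinp (fun p => tsum (fun q => G (amul p.1 q.1, amul p.2 q.2)) y).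
  by move=> bG; apply: bilinp_tsum => q; apply: bilinp_mulr.
do 12?split; move=> *; apply: eq_tens => G bG.
- by rewrite !tsum_add // addrA.
- by rewrite !tsum_add // addrC.
- by rewrite tsum_add // tsum0 // add0r.
- by rewrite tsum_add // tsumN // tsum0 // addNr.
- by rewrite tsumZ // !tsum_add // !tsumZ // mulrDr.
- by rewrite tsumZ // !tsum_add // !tsumZ // mulrDl.
- by rewrite !tsumZ // mulrA.
- by rewrite tsumZ // mul1r.
- rewrite tsum_add // !tsum_mul // -tsum_split.
  by apply: eq_tsum => p; rewrite tsum_add //; exact: bilinp_mull.
- by rewrite tsum_mul // (tsum_add _ _ (mrs _ _ bG)) !tsum_add // !tsum_mul.
- by rewrite tsum_mul // (tsumZ _ _ (mrs _ _ bG)) tsumZ // tsum_mul.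
- rewrite tsum_mul // tsumZ // tsum_mul // -tsum_mulr.
  by apply: eq_tsum => p; rewrite tsumZ //; exact: bilinp_mull.
- rewrite tsum_mul // [RHS]tsum_mul // (tsum_mul _ _ (mrs _ _ bG)).
  apply: eq_tsum => p; rewrite tsum_mul; last exact: bilinp_mull.
  by apply: eq_tsum => q; apply: eq_tsum => r; rewrite /= !alg_mulA.
Qed.

Lemma polyA_alg : is_alg (polyA F).
Proof.
do 12?split=> /=.
- exact: addrA.
- exact: addrC.
- exact: add0r.
- exact: addNr.
- exact: scalerDr.
- by move=> a b x; rewrite scalerDl.
- exact: scalerA.
- exact: scale1r.
- exact: mulrDr.
- exact: mulrDl.
- by move=> a x y; rewrite scalerAl.
- by move=> a x y; rewrite scalerAr.
- exact: mulrA.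
Qed.

Lemma tmap_hom X Y X' Y' (f : X -> X') (g : Y -> Y') :
  is_alg X' -> is_alg Y' -> is_hom f -> is_hom g -> is_hom (tmap f g).
Proof.
move=> HX' HY' hf hg; have bfg (G : (X' * Y')%type -> F) (bG : bilinp G) :=
  bilinp_comp bG (hom_linear hf) (hom_linear hg).
case: hf hg => _ _ fM [_ _ gM].
split=> [x y|a x|x y]; apply: eq_tens => G bG.
- by rewrite tsum_tmap // (tsum_add _ _ (bfg _ bG)) tsum_add // !tsum_tmap.
- by rewrite tsum_tmap // (tsumZ _ _ (bfg _ bG)) tsumZ // tsum_tmap.
- rewrite tsum_tmap // (tsum_mul _ _ (bfg _ bG)) tsum_mul // tsum_tmap; last first.
    by apply: bilinp_tsum => q; apply: bilinp_mulr.
  apply: eq_tsum => p; rewrite tsum_tmap; last exact: bilinp_mull.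
  by apply: eq_tsum => q; rewrite /= fM gM.
Qed.

Lemma tmap_comp X Y X' Y' X'' Y'' (f : X -> X') (g : Y -> Y') (f' : X' -> X'') (g' : Y' -> Y'')
  (x : tens X Y) :
  is_linear f' -> is_linear g' -> tmap f' g' (tmap f g x) = tmap (f' \o f) (g' \o g) x.
Proof.
move=> lf lg; apply: eq_tens => G bG.
by rewrite tsum_tmap // (tsum_tmap _ _ _ (bilinp_comp bG lf lg)) tsum_tmap.
Qed.

Lemma eq_tmap X Y X' Y' (f f' : X -> X') (g g' : Y -> Y') :
  f =1 f' -> g =1 g' -> tmap f g =1 tmap f' g'.
Proof. by move=> ef eg x; rewrite /tmap; congr tclass; apply: eq_map => p; rewrite ef eg. Qed.

Lemma tmap_id X Y (x : tens X Y) : tmap id id x = x.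
Proof. by rewrite -[RHS]tclassK /tmap -[trepr x in RHS]map_id; congr tclass; apply: eq_map => -[]. Qed.

Definition etens X Y (b : X) (c : Y) : tens X Y := tclass [:: (b, c)].

Lemma tsum_etens X Y G (b : X) (c : Y) : bilinp G -> tsum G (etens b c) = G (b, c).
Proof. by move=> bG; rewrite tsum_tclass // big_seq1. Qed.

Lemma etensDl X Y (b b' : X) (c : Y) : etens (aadd b b') c = aadd (etens b c) (etens b' c).
Proof. by apply: eq_tens => G bG; rewrite tsum_add // !tsum_etens //; case: bG. Qed.

Lemma etensDr X Y (b : X) (c c' : Y) : etens b (aadd c c') = aadd (etens b c) (etens b c').
Proof. by apply: eq_tens => G bG; rewrite tsum_add // !tsum_etens //; case: bG. Qed.

Lemma etensZl X Y a (b : X) (c : Y) : etens (ascale a b) c = ascale a (etens b c).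
Proof. by apply: eq_tens => G bG; rewrite tsumZ // !tsum_etens //; case: bG. Qed.

Lemma etensZr X Y a (b : X) (c : Y) : etens b (ascale a c) = ascale a (etens b c).
Proof. by apply: eq_tens => G bG; rewrite tsumZ // !tsum_etens //; case: bG. Qed.

Lemma etens_mul X Y (b b' : X) (c c' : Y) : is_alg X -> is_alg Y ->
  amul (etens b c) (etens b' c') = etens (amul b b') (amul c c').
Proof.
move=> HX HY; apply: eq_tens => G bG.
rewrite tsum_mul // (tsum_etens _ _ (bilinp_tsum _ (bilinp_mulr HX HY bG))).
rewrite tsum_etens; last exact: (bilinp_mull HX HY bG (b, c)).
by rewrite tsum_etens.
Qed.

Lemma tmap_etens X Y X' Y' (f : X -> X') (g : Y -> Y') (b : X) (c : Y) :
  is_linear f -> is_linear g -> tmap f g (etens b c) = etens (f b) (g c).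
Proof.
move=> lf lg; apply: eq_tens => G bG.
by rewrite tsum_tmap // (tsum_etens _ _ (bilinp_comp bG lf lg)) tsum_etens.
Qed.

Lemma tmap_swap X Y X' Y' (f : X -> X') (g : Y -> Y') (x : tens X Y) :
  is_linear f -> is_linear g -> tmap id g (tmap f id x) = tmap f id (tmap id g x).
Proof. by move=> lf lg; rewrite !tmap_comp //; apply: eq_tmap. Qed.

Lemma etens_mulr_linear X (m : X) (p : polyA F) :
  is_linear (fun q : polyA F => etens m (amul q p)).
Proof. by split=> * /=; rewrite ?mulrDl ?etensDr // -scalerAl etensZr. Qed.

End Tensors.

(* An algebra viewed as a MathComp vector space; the instances depend on the
   hypothesis [is_alg V], hence are local to the section below. *)
Definition alg_vect (F : fieldType) (V : alg F) : Type := car V.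

Section AlgebraAsVectorSpace.
Variables (F : fieldType) (V : alg F).
Hypothesis HV : is_alg V.

HB.instance Definition _ := gen_eqMixin (alg_vect V).
HB.instance Definition _ := gen_choiceMixin (alg_vect V).
HB.instance Definition _ :=
  GRing.isZmodule.Build (alg_vect V) (alg_addA HV) (alg_addC HV) (alg_add0 HV) (alg_addN HV).
HB.instance Definition _ := GRing.Zmodule_isLmodule.Build F (alg_vect V)
  (alg_scaleA HV) (alg_scale1 HV) (alg_scaleDr HV) (fun v a b => alg_scaleDl HV a b v).

Lemma linforms_separate (u v : V) : (forall l, is_linform l -> l u = l v) -> u = v.
Proof. exact: (@linear_forms_separate F (alg_vect V)). Qed.

End AlgebraAsVectorSpace.

Section Evaluation.
Variables (F : fieldType) (V : alg F).
Hypothesis HV : is_alg V.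
Implicit Types (l : V -> F) (x : tens V (polyA F)).

Definition ev_form l a (p : (V * polyA F)%type) := (p.2 : {poly F}).[a] * l p.1.

Lemma bilinp_ev l a : is_linform l -> bilinp (ev_form l a).
Proof.
case=> lD lZ; split=> * /=; rewrite /ev_form ?lD ?lZ ?hornerD ?hornerZ.
- by rewrite mulrDr.
- by rewrite mulrCA.
- by rewrite mulrDl.
- by rewrite mulrA.
Qed.

Lemma linform_ev l a x : is_linform l -> l (ev a x) = tsum (ev_form l a) x.
Proof.
move=> ll; rewrite /ev /tsum; elim: (trepr x) => [|p s IHs] /=.
  by rewrite big_nil linform0.
by case: ll => lD lZ; rewrite big_cons lD lZ IHs.
Qed.

Lemma ev_etens a (m : V) (q : polyA F) : ev a (etens m q) = ascale (q : {poly F}).[a] m.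
Proof.
apply: linforms_separate => // l ll.
by rewrite linform_ev // tsum_etens; [case: ll => _ -> | exact: bilinp_ev].
Qed.

Lemma ev_hom a : is_hom (ev a : tens V (polyA F) -> V).
Proof.
split=> [x y|c x|x y]; apply: linforms_separate => // l ll.
- by case: (ll) => lD _; rewrite lD !linform_ev // tsum_add //; exact: bilinp_ev.
- by case: (ll) => _ lZ; rewrite lZ !linform_ev // tsumZ //; exact: bilinp_ev.
have lmulr u : is_linform (fun v => l (amul v u)).
  by case: ll => lD lZ; split=> *; rewrite ?alg_mulDl ?alg_mulZl ?lD ?lZ.
have lmull u : is_linform (fun v => l (amul u v)).
  by case: ll => lD lZ; split=> *; rewrite ?alg_mulDr ?alg_mulZr ?lD ?lZ.
rewrite linform_ev // tsum_mul; last exact: bilinp_ev.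
rewrite (linform_ev _ _ (lmulr _)); apply: eq_tsum => p.
rewrite [RHS]/ev_form (linform_ev _ _ (lmull _)) -tsum_mulr; apply: eq_tsum => q.
by rewrite /ev_form /= hornerM mulrA.
Qed.

End Evaluation.

Lemma ev_tmap (F : fieldType) (V W : alg F) (f : V -> W) a (x : tens V (polyA F)) :
  is_alg V -> is_alg W -> is_hom f -> f (ev a x) = ev a (tmap f id x).
Proof.
move=> HV HW hf; apply: linforms_separate => // l ll.
have llf := linform_comp ll (hom_linear hf).
rewrite -[l (f _)]/((l \o f) _) !linform_ev // tsum_tmap //; exact: bilinp_ev.
Qed.

(** * Pro-algebras and pro-morphisms *)

Section ProAlgebraAxioms.
Variables (F : fieldType) (C : proalg F).
Hypothesis HC : is_proalg C.

Lemma proalg_obj i : is_alg (obj C i).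
Proof. by case: HC => _ [_ [_ [_ [? _]]]]. Qed.

Lemma proalg_hom i j (h : @ple _ C i j) : is_hom (ptr h).
Proof. by case: HC => _ [_ [_ [_ [_ [? _]]]]]. Qed.

End ProAlgebraAxioms.

Section ProMorphisms.
Variable F : fieldType.
Implicit Types (C D : proalg F) (X : alg F).

Lemma germ_eq_sym C X i (f : obj C i -> X) i' (f' : obj C i' -> X) :
  germ_eq f f' -> germ_eq f' f.
Proof. by case=> k [hk [hk' e]]; exists k, hk', hk => x; rewrite e. Qed.

Lemma germ_eq_trans C X i1 (f1 : obj C i1 -> X) i2 (f2 : obj C i2 -> X)
  i3 (f3 : obj C i3 -> X) : is_proalg C -> germ_eq f1 f2 -> germ_eq f2 f3 -> germ_eq f1 f3.
Proof.
case=> _ [ple_trans [_ [dir [_ [_ [_ ptr_comp]]]]]] [k1 [h1 [h2 e12]]] [k2 [h2' [h3 e23]]].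
have [k [hk1 hk2]] := dir k1 k2.
have h2k := ple_trans _ _ _ h2 hk1.
exists k, (ple_trans _ _ _ h1 hk1), (ple_trans _ _ _ h3 hk2) => x.
rewrite -(ptr_comp _ _ _ h1 hk1) e12 (ptr_comp _ _ _ h2 hk1 h2k).
by rewrite -(ptr_comp _ _ _ h2' hk2) e23 (ptr_comp _ _ _ h3 hk2 (ple_trans _ _ _ h3 hk2)).
Qed.

Lemma pm_eq_sym C D (phi psi : promor C D) : pm_eq phi psi -> pm_eq psi phi.
Proof. by move=> e j; apply: germ_eq_sym. Qed.

Lemma pm_eq_trans C D (phi psi chi : promor C D) :
  is_proalg C -> pm_eq phi psi -> pm_eq psi chi -> pm_eq phi chi.
Proof. by move=> HC e1 e2 j; exact: germ_eq_trans HC (e1 j) (e2 j). Qed.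

Lemma germ_eq_constE (A : alg F) X (f f' : A -> X) :
  @germ_eq _ (constP A) X tt f tt f' <-> f =1 f'.
Proof. by split=> [[k [hk [hk' e]]] x|e]; [exact: e x|exists tt, I, I]. Qed.

Lemma polyP_proalg C : is_proalg C -> is_proalg (Defs.polyP C).
Proof.
move=> HC; have [refl [trans [inh [dir [_ [_ [ptr_id ptr_comp]]]]]]] := HC.
do 4!(split=> //); split; [|split; [|split]].
- by move=> i; apply: tens_alg; [exact: proalg_obj | exact: polyA_alg].
- move=> i j h; apply: tmap_hom; [exact: proalg_obj|exact: polyA_alg|exact: proalg_hom|by []].
- by move=> i h x /=; rewrite -[RHS]tmap_id; apply: eq_tmap.
- move=> i j k hij hjk hik x /=; rewrite tmap_comp; last 2 first.
  + exact/hom_linear/proalg_hom.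
  + by [].
  by apply: eq_tmap => // y /=; rewrite ptr_comp.
Qed.

Lemma evP_comp_promor C D (H : promor C (Defs.polyP D)) a :
  is_proalg D -> is_promor H -> is_promor (pm_comp (evP D a) H).
Proof.
move=> HD [H_hom H_compat]; split=> [j|j j' h].
  exact: comp_hom (ev_hom (proalg_obj HD j) a) (H_hom j).
have [k [hk [hk' e]]] := H_compat j j' h.
exists k, hk, hk' => x /=; rewrite -e.
apply: ev_tmap; [exact: proalg_obj | exact: proalg_obj | exact: proalg_hom].
Qed.

Section Universal.
Variables (A B : alg F) (M : proalg F) (U : promor (constP A) (tensP B M)).
Hypothesis univU : is_universal U.

Lemma universal_factor C phi : is_proalg C -> is_promor phi ->
  exists psi : promor M C, is_promor psi /\ pm_eq phi (pm_comp (idtens B psi) U).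
Proof.
move=> HC phiP; have [psi [psiP factor _]] := univU.2.2 C HC phi phiP.
by exists psi; split; last exact: pm_eq_sym.
Qed.

Lemma universal_factor_unique C phi (psi psi' : promor M C) :
  is_proalg C -> is_promor phi -> is_promor psi -> is_promor psi' ->
  pm_eq (pm_comp (idtens B psi) U) phi -> pm_eq (pm_comp (idtens B psi') U) phi ->
  pm_eq psi psi'.
Proof.
move=> HC phiP psiP psi'P e e'; have [chi [_ _ uniq]] := univU.2.2 C HC phi phiP.
exact: pm_eq_trans univU.1 (uniq _ psiP e) (pm_eq_sym (uniq _ psi'P e')).
Qed.

End Universal.

Definition upsilon_comp (A A' B B' : alg F) (M : proalg F)
  (U : promor (constP A') (tensP B M)) (f : A -> A') (g : B -> B') :
  promor (constP A) (tensP B' M) :=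
  pm_comp (gtens g M) (pm_comp U (const_mor f)).

Lemma promor_compat_const (A : alg F) (M : proalg F) (U : promor (constP A) M) j j' (h : ple j j') x :
  is_promor U -> ptr h (pmap U j' x) = pmap U j x.
Proof. by move=> [_ /(_ j j' h) /germ_eq_constE]. Qed.

Lemma upsilon_comp_promor (A A' B B' : alg F) (M : proalg F)
  (U : promor (constP A') (tensP B M)) (f : A -> A') (g : B -> B') :
  is_alg B' -> is_proalg M -> is_promor U -> is_hom f -> is_hom g ->
  is_promor (upsilon_comp U f g).
Proof.
move=> HB' HM UP hf hg; split=> [j|j j' h].
  apply: comp_hom; last exact: comp_hom (UP.1 j) hf.
  by apply: tmap_hom => //; exact: proalg_obj.
apply/germ_eq_constE => x /=; rewrite tmap_swap; last 2 first.
- exact: hom_linear.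
- exact/hom_linear/proalg_hom.
by have /= -> := promor_compat_const (U := U) h (f x) UP.
Qed.

End ProMorphisms.

(** * Lifting a pair of homotopies *)

Lemma exchange_big6 (R : nmodType) (T1 T2 T3 : Type) (s1 s1' : seq T1) (s2 : T1 -> seq T2)
  (s3 : T2 -> seq T3) (E : T1 -> T2 -> T3 -> T1 -> T2 -> T3 -> R) :
  \sum_(a1 <- s1) \sum_(b1 <- s2 a1) \sum_(c1 <- s3 b1) \sum_(a2 <- s1') \sum_(b2 <- s2 a2)
     \sum_(c2 <- s3 b2) E a1 b1 c1 a2 b2 c2 =
  \sum_(a1 <- s1) \sum_(a2 <- s1') \sum_(b1 <- s2 a1) \sum_(b2 <- s2 a2) \sum_(c1 <- s3 b1)
     \sum_(c2 <- s3 b2) E a1 b1 c1 a2 b2 c2.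
Proof.
apply: eq_bigr => a1 _; rewrite [RHS]exchange_big; apply: eq_bigr => b1 _.
by rewrite exchange_big; apply: eq_bigr => a2 _; exact: exchange_big.
Qed.

Section HomotopyLift.
Variables (F : fieldType) (A A' B B' : alg F) (M : proalg F).
Hypotheses (HA' : is_alg A') (HB' : is_alg B') (HM : is_proalg M).
Variable U : promor (constP A') (tensP B M).
Hypothesis UP : is_promor U.
Variables (Hf : A -> tens A' (polyA F)) (Hg : B -> tens B' (polyA F)).
Hypotheses (Hf_hom : is_hom Hf) (Hg_hom : is_hom Hg).

(* (H_g (x) id (x) id) (Upsilon_j (x) id) (H_f x), with b' (x) q (x) m (x) p
   rearranged into b' (x) (m (x) q p). *)
Definition hlift j (x : A) : tens B' (tens (obj M j) (polyA F)) :=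
  tclass (flatten [seq flatten [seq [seq (r.1, etens bm.2 (amul r.2 ap.2)) | r <- trepr (Hg bm.1)]
                               | bm <- trepr (pmap U j ap.1)]
                  | ap <- trepr (Hf x)]).

Section LiftForms.
Variables (j : pidx M) (G : (B' * tens (obj M j) (polyA F))%type -> F).
Hypothesis bG : bilinp G.

Definition lift_form3 (m : obj M j) (p : polyA F) (r : (B' * polyA F)%type) :=
  G (r.1, etens m (amul r.2 p)).
Definition lift_form2 (p : polyA F) (bm : (B * obj M j)%type) :=
  tsum (lift_form3 bm.2 p) (Hg bm.1).
Definition lift_form1 (ap : (A' * polyA F)%type) :=
  tsum (lift_form2 ap.2) (pmap U j ap.1).

Lemma tsum_hlift x : tsum G (hlift j x) = tsum lift_form1 (Hf x).
Proof.
rewrite tsum_tclass // big_flatten big_map; apply: eq_bigr => ap _.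
by rewrite big_flatten big_map; apply: eq_bigr => bm _; rewrite big_map.
Qed.

Lemma bilinp_lift_form3 m p : bilinp (lift_form3 m p).
Proof. exact: (bilinp_comp bG (linear_id _) (etens_mulr_linear m p)). Qed.

Lemma bilinp_lift_form2 p : bilinp (lift_form2 p).
Proof.
apply: bilinp_tsum_linear (hom_linear Hg_hom) (bilinp_lift_form3 ^~ p) _ _ => *.
- by rewrite /lift_form3 etensDl; case: bG.
- by rewrite /lift_form3 etensZl; case: bG.
Qed.

Lemma bilinp_lift_form1 : bilinp lift_form1.
Proof.
apply: bilinp_tsum_linear (hom_linear (UP.1 j)) bilinp_lift_form2 _ _ => [p p'|c p] bm.
- rewrite /lift_form2 -tsum_split; apply: eq_tsum => r.
  by rewrite /lift_form3 /= mulrDr etensDr; case: bG.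
- rewrite /lift_form2 -tsum_mulr; apply: eq_tsum => r.
  by rewrite /lift_form3 /= -scalerAr etensZr; case: bG.
Qed.

End LiftForms.

Lemma hlift_hom j : is_hom (hlift j).
Proof.
have HT : is_alg (tens (obj M j) (polyA F)) := tens_alg (proalg_obj HM j) (polyA_alg F).
have [HfD HfZ HfM] := Hf_hom; have [HgD HgZ HgM] := Hg_hom; have [UD UZ UM] := UP.1 j.
split=> [x y|c x|x y]; apply: eq_tens => G bG.
- rewrite (tsum_hlift bG) HfD (tsum_add _ _ (bilinp_lift_form1 bG)).
  by rewrite tsum_add // !(tsum_hlift bG).
- rewrite (tsum_hlift bG) HfZ (tsumZ _ _ (bilinp_lift_form1 bG)).
  by rewrite tsumZ // (tsum_hlift bG).
have bG' : bilinp (fun u => tsum (fun v => G (amul u.1 v.1, amul u.2 v.2)) (hlift j y)).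
  by apply: bilinp_tsum => v; exact: bilinp_mulr.
rewrite (tsum_hlift bG) HfM (tsum_mul _ _ (bilinp_lift_form1 bG)) tsum_mul // (tsum_hlift bG').
(* Both sides expand into the same six-fold sum, in different orders. *)
pose E (a1 : (A' * polyA F)%type) (b1 : (B * obj M j)%type) (c1 : (B' * polyA F)%type)
  (a2 : (A' * polyA F)%type) (b2 : (B * obj M j)%type) (c2 : (B' * polyA F)%type) :=
  G (amul c1.1 c2.1,
  etens (amul b1.2 b2.2) (amul (amul c1.2 a1.2) (amul c2.2 a2.2))).
transitivity (\sum_(a1 <- trepr (Hf x)) \sum_(a2 <- trepr (Hf y))
  \sum_(b1 <- trepr (pmap U j a1.1)) \sum_(b2 <- trepr (pmap U j a2.1))
  \sum_(c1 <- trepr (Hg b1.1)) \sum_(c2 <- trepr (Hg b2.1)) E a1 b1 c1 a2 b2 c2).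
  apply: eq_bigr => a1 _; apply: eq_bigr => a2 _.
  rewrite /lift_form1 /= UM (tsum_mul _ _ (bilinp_lift_form2 bG _)).
  apply: eq_bigr => b1 _; apply: eq_bigr => b2 _.
  rewrite /lift_form2 /= HgM (tsum_mul _ _ (bilinp_lift_form3 bG _ _)).
  apply: eq_bigr => c1 _; apply: eq_bigr => c2 _.
  by rewrite /lift_form3 /E /= mulrACA.
rewrite -exchange_big6; apply: eq_tsum => a1; apply: eq_tsum => b1; apply: eq_tsum => c1.
rewrite /lift_form3 (tsum_hlift (bilinp_mull HB' HT bG _)).
apply: eq_tsum => a2; apply: eq_tsum => b2; apply: eq_tsum => c2.
by rewrite /E /lift_form3 (etens_mul _ _ _ _ (proalg_obj HM j) (polyA_alg F)).
Qed.

Lemma hlift_compat j j' (h : ple j j') x :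
  tmap id (tmap (ptr h) id) (hlift j' x) = hlift j x.
Proof.
have ptr_lin : is_linear (tmap (ptr h) (@id (polyA F))).
  apply: hom_linear; apply: tmap_hom; [exact: proalg_obj|exact: polyA_alg|exact: proalg_hom|by []].
apply: eq_tens => G bG; have bG' := bilinp_comp bG (linear_id _) ptr_lin.
rewrite tsum_tmap // (tsum_hlift bG') (tsum_hlift bG); apply: eq_tsum => ap.
rewrite /lift_form1 -(promor_compat_const (U := U) h _ UP) /= tsum_tmap; last exact: bilinp_lift_form2.
apply: eq_tsum => bm; apply: eq_tsum => r.
by rewrite /lift_form3 /= tmap_etens //; exact/hom_linear/proalg_hom.
Qed.

Lemma hlift_ev a (fa : A -> A') (ga : B -> B') j x :
  (forall x, ev a (Hf x) = fa x) -> (forall b, ev a (Hg b) = ga b) ->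
  tmap id (ev a) (hlift j x) = tmap ga id (pmap U j (fa x)).
Proof.
move=> Hfa Hga; have HMj := proalg_obj HM j.
have ev_lin : is_linear (ev a : tens (obj M j) (polyA F) -> _) := hom_linear (ev_hom HMj a).
apply: eq_tens => G bG; have bGev := bilinp_comp bG (linear_id _) ev_lin.
rewrite !tsum_tmap // (tsum_hlift bGev) -Hfa.
have bGga : bilinp (fun p => G (ev a (Hg p.1), p.2)).
  exact: bilinp_comp bG (comp_linear (hom_linear (ev_hom HB' a)) (hom_linear Hg_hom)) (linear_id _).
rewrite (eq_tsum _ (fun p => congr1 (fun b => G (b, p.2)) (esym (Hga p.1)))).
rewrite (linform_ev HA' _ _ (linform_tsum (hom_linear (UP.1 j)) bGga)); apply: eq_tsum => ap.
rewrite /ev_form -tsum_mulr; apply: eq_tsum => bm.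
rewrite (linform_ev HB' _ _ (bilinp_linform_l bm.2 bG)) -tsum_mulr; apply: eq_tsum => r.
rewrite /lift_form3 /= ev_etens // hornerM.
by case: bG => _ _ _ G4; rewrite G4 /ev_form mulrCA mulrA.
Qed.

End HomotopyLift.

(** * Homotopy invariance *)

Lemma clos_rt_map (T T' : Type) (R : relation T) (R' : relation T') (h : T -> T') :
  (forall x y, R x y -> R' (h x) (h y)) ->
  forall x y, clos_refl_trans _ R x y -> clos_refl_trans _ R' (h x) (h y).
Proof.
by move=> hR x y; elim=> [? ? /hR|?|? ? ? _ ? _]; [exact: rt_step|exact: rt_refl|exact: rt_trans].
Qed.

Lemma elem_htpy_refl (F : fieldType) (X Y : alg F) (f : X -> Y) :
  is_alg Y -> is_hom f -> elem_htpy f f.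
Proof.
move=> HY hf; have [fD fZ fM] := hf; do 2!split=> //.
exists (fun x => etens (f x) (1 : polyA F)); split; last first.
  by split=> x; rewrite ev_etens // hornerC alg_scale1.
split=> *; rewrite ?fD ?fZ ?fM ?etensDl ?etensZl //.
by rewrite etens_mul //= ?mulr1 //; exact: polyA_alg.
Qed.

Definition htpy_pair (F : fieldType) (A A' B B' : alg F) (p q : ((A -> A') * (B -> B'))%type) :=
  elem_htpy p.1 q.1 /\ elem_htpy p.2 q.2.

Lemma homotopic_htpy_pair (F : fieldType) (A A' B B' : alg F) f0 f1 g0 g1 :
  is_alg A' -> is_alg B' -> is_hom f1 -> is_hom g0 ->
  homotopic f0 f1 -> homotopic g0 g1 ->
  clos_refl_trans _ (@htpy_pair F A A' B B') (f0, g0) (f1, g1).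
Proof.
move=> HA' HB' hf1 hg0 hf hg; apply: (rt_trans _ _ _ (f1, g0)).
  by apply: (clos_rt_map (h := fun f => (f, g0))) hf => f f' ef; split=> //; exact: elem_htpy_refl.
by apply: (clos_rt_map (h := pair f1)) hg => g g' eg; split=> //; exact: elem_htpy_refl.
Qed.

Section MeasuringHomotopy.
Variables (F : fieldType) (A A' B B' : alg F) (M1 M2 : proalg F).
Variables (U1 : promor (constP A) (tensP B' M1)) (U2 : promor (constP A') (tensP B M2)).
Hypotheses (HA' : is_alg A') (HB' : is_alg B').
Hypotheses (univU1 : is_universal U1) (univU2 : is_universal U2).

Let HM2 : is_proalg M2 := univU2.1.
Let U2P : is_promor U2 := univU2.2.1.

Definition represents (f : A -> A') (g : B -> B') (P : promor M1 M2) :=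
  [/\ is_hom f, is_hom g, is_promor P & pm_eq (upsilon_comp U2 f g) (pm_comp (idtens B' P) U1)].

Lemma represents_exists f g : is_hom f -> is_hom g -> exists P, represents f g P.
Proof.
move=> hf hg; have [P [PP eP]] := universal_factor univU1 HM2 (upsilon_comp_promor HB' HM2 U2P hf hg).
by exists P.
Qed.

Definition hlift_pm Hf Hg : promor (constP A) (tensP B' (Defs.polyP M2)) :=
  @PM _ (constP A) (tensP B' (Defs.polyP M2)) (fun _ => tt) (fun j => hlift U2 Hf Hg j).

Lemma hlift_pm_promor Hf Hg : is_hom Hf -> is_hom Hg -> is_promor (hlift_pm Hf Hg).
Proof.
move=> hHf hHg; split=> [j|j j' h]; first exact: hlift_hom.
by apply/germ_eq_constE => x; exact: hlift_compat.
Qed.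

Lemma ev_hlift_factor Hf Hg (H : promor M1 (Defs.polyP M2)) a fa ga :
  is_hom Hg -> (forall x, ev a (Hf x) = fa x) -> (forall b, ev a (Hg b) = ga b) ->
  pm_eq (hlift_pm Hf Hg) (pm_comp (idtens B' H) U1) ->
  pm_eq (upsilon_comp U2 fa ga) (pm_comp (idtens B' (pm_comp (evP M2 a) H)) U1).
Proof.
move=> hHg Hfa Hga factor j; apply/germ_eq_constE => x /=.
have /germ_eq_constE /(_ x) /= factor_x := factor j.
have ev_lin := hom_linear (ev_hom (proalg_obj HM2 j) a).
rewrite -[RHS]/(tmap (id \o id) (ev a \o _) _) -tmap_comp // -factor_x.
by apply: esym; apply: hlift_ev.
Qed.

Lemma represents_elem_htpyP f f' g g' P P' :
  elem_htpy f f' -> elem_htpy g g' -> represents f g P -> represents f' g' P' ->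
  elem_htpyP P P'.
Proof.
move=> [hf [hf' [Hf [hHf [Hf0 Hf1]]]]] [hg [hg' [Hg [hHg [Hg0 Hg1]]]]].
have [H [HP factor]] :=
  universal_factor univU1 (polyP_proalg HM2) (hlift_pm_promor hHf hHg).
have ev_eq a fa ga Pa : (forall x, ev a (Hf x) = fa x) -> (forall b, ev a (Hg b) = ga b) ->
    represents fa ga Pa -> pm_eq (pm_comp (evP M2 a) H) Pa.
  move=> Hfa Hga [hfa hga PaP ePa].
  apply: (universal_factor_unique univU1 HM2 (upsilon_comp_promor HB' HM2 U2P hfa hga)) => //.
  - exact: evP_comp_promor.
  - exact/pm_eq_sym/(ev_hlift_factor hHg Hfa Hga factor).
  - exact: pm_eq_sym.
move=> RP RP'; have [_ _ PP _] := RP; have [_ _ PP' _] := RP'.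
by do 2!split=> //; exists H; split=> //; split; [exact: ev_eq RP | exact: ev_eq RP'].
Qed.

Lemma represents_strongly_homotopic p q :
  clos_refl_trans _ (@htpy_pair F A A' B B') p q -> forall P Q,
  represents p.1 p.2 P -> represents q.1 q.2 Q -> strongly_homotopic P Q.
Proof.
elim/clos_refl_trans_ind_right => [|s t [ef eg] IH _] P Q RP RQ.
  have [hf hg _ _] := RP; apply: rt_step.
  by apply: represents_elem_htpyP RP RQ; apply: elem_htpy_refl.
have [_ [ht1 _]] := ef; have [_ [ht2 _]] := eg; have [R RR] := represents_exists ht1 ht2.
exact: rt_trans (rt_step _ _ _ _ (represents_elem_htpyP ef eg RP RR)) (IH R Q RR RQ).
Qed.

End MeasuringHomotopy.

Theorem mainTheorem7 (F : fieldType) (A A' B B' : alg F)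
  (f0 f1 : A -> A') (g0 g1 : B -> B')
  (MAB' MA'B : proalg F)
  (UAB' : promor (constP A) (tensP B' MAB'))
  (UA'B : promor (constP A') (tensP B MA'B))
  (Phi0 Phi1 : promor MAB' MA'B) :
  is_alg A -> is_alg A' -> is_alg B -> is_alg B' ->
  is_hom f0 -> is_hom f1 -> is_hom g0 -> is_hom g1 ->
  homotopic f0 f1 -> homotopic g0 g1 ->
  is_universal UAB' -> is_universal UA'B ->
  is_promor Phi0 ->
  pm_eq (pm_comp (gtens g0 MA'B) (pm_comp UA'B (const_mor f0)))
        (pm_comp (idtens B' Phi0) UAB') ->
  is_promor Phi1 ->
  pm_eq (pm_comp (gtens g1 MA'B) (pm_comp UA'B (const_mor f1)))
        (pm_comp (idtens B' Phi1) UAB') ->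
  strongly_homotopic Phi0 Phi1.
Proof.
move=> _ HA' _ HB' hf0 hf1 hg0 hg1 hf hg univ1 univ2 Phi0P e0 Phi1P e1.
by apply: (represents_strongly_homotopic HA' HB' univ1 univ2
            (homotopic_htpy_pair HA' HB' hf1 hg0 hf hg)); split.
Qed.
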